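(* In the synchronous authenticated setting with $n$ parties of which at most $t<n/2$ are Byzantine, the protocol ''Synchronous Crypto. $\frac{n}{2}$-BB'' described in the context, run with an $l$-bit sender input, satisfies Termination, Agreement and Validity of Byzantine broadcast, and has communication complexity $O(nl+\mathcal{B}(k)+\mathcal{A}(1)+kn^2)$.
   Context: Model: $n$ parties connected pairwise by reliable authenticated channels; synchronous; static PPT (in security parameter $k$) adversary corrupting up to $t$ parties (Byzantine). Trusted setup: PKI and accumulator key $ak$. Properties hold except with probability negligible in $k$. Communication complexity = worst-case total bits sent by honest parties. Byzantine broadcast (BB): sender $P_s$ holds input $m$; Termination: every honest party outputs; Agreement: all honest outputs equal; Validity: if the sender is honest, all honest parties output $m$. A $k$-bit BB oracle has cost $\mathcal{B}(k)$. Byzantine agreement (BA): each party has an input; every honest party outputs, honest outputs are equal, and if all honest inputs equal $v$ the output is $v$; a 1-bit BA oracle has cost $\mathcal{A}(1)$. Reed–Solomon code: $\texttt{ENC}$ maps $b$ data symbols to $n$ codeword symbols, any $b$ of which determine the data; $\texttt{DEC}$ corrects $c$ errors and $d$ erasures whenever $n-b\ge 2c+d$. Let $b=n-t$. Accumulator: deterministic $\texttt{Eval}(ak,\mathcal{D})$ returns an $O(k)$-bit value; $\texttt{CreateWit}(ak,z,d)$ returns an $O(k)$-bit witness for $d\in\mathcal{D}$; $\texttt{Verify}(ak,z,w,d)$ accepts honestly generated witnesses; collision-free: a PPT adversary cannot output $\mathcal{D}$, $d'\notin\mathcal{D}$, $w'$ with $\texttt{Verify}(ak,\texttt{Eval}(ak,\mathcal{D}),w',d')$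 true except with negligible probability. Subroutines: $\texttt{Encode}(m,b)$ splits $m$ into $b$ equal blocks, computes $(s_1,\dots,s_n)=\texttt{ENC}(\text{blocks})$, returns $((1,s_1),\dots,(n,s_n))$. $\texttt{Distribute}(\mathcal{D},ak,z)$: send $(s_j,\texttt{CreateWit}(ak,z,(j,s_j)))$ to each $P_j$. $\texttt{Reconstruct}(\mathcal{S},ak,z,d_0)$: erase every $s_j$ whose witness fails $\texttt{Verify}(ak,z,w_j,(j,s_j))$ (or is missing), apply $\texttt{DEC}$ with $c=0,d=d_0$, return concatenated blocks. Protocol: (1) The sender computes $\mathcal{D}_s=\texttt{Encode}(m_s,b)$, $z_s=\texttt{Eval}(ak,\mathcal{D}_s)$, sends $m_s$ to every party, and broadcasts $z_s$ via a $k$-bit BB oracle. (2) Each $P_i$, with $m$ the message received from the sender and $z$ the BB output, computes $\mathcal{D}_i=\texttt{Encode}(m,b)$, $z_i=\texttt{Eval}(ak,\mathcal{D}_i)$, sets $happy_i=1$ if $z_i=z$ and $0$ otherwise, and inputs $happy_i$ to a 1-bit BA oracle. (3) If that outputs $0$, output $\bot$ and abort; if it outputs $1$ and $happy_i=1$, invoke $\texttt{Distribute}(\mathcal{D}_i,ak,z)$. (4) If some received pair $(s_i,w_i)$ satisfies $\texttt{Verify}(ak,z,w_i,(i,s_i))$, send it to all parties. (5) If $happy_i=1$ set $o_i=m$; otherwise $o_i=\texttt{Reconstruct}(\mathcal{S}_i,ak,z,t)$, where $\mathcal{S}_i$ collects the pair received from each $P_j$ in step 4. (6) Output $o_i$.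 *)

From HB Require Import structures.
From mathcomp Require Import all_boot.
Set Implicit Arguments. Unset Strict Implicit. Unset Printing Implicit Defensive.

Definition bits := seq bool.
(* accumulated items (j, s_j); indices are 0-based *)
Definition item := (nat * bits)%type.

Record accumulator (AK : Type) := Accumulator {
  acc_eval : AK -> seq item -> bits;
  acc_createwit : AK -> bits -> item -> bits;
  acc_verify : AK -> bits -> bits -> item -> bool
}.

Definition acc_correct AK (A : accumulator AK) (ak : AK) : Prop :=
  forall (D : seq item) (d : item), d \in D ->
    acc_verify A ak (acc_eval A ak D) (acc_createwit A ak (acc_eval A ak D) d) d.

Definition acc_size AK (A : accumulator AK) (ak : AK) (k ca : nat) : Prop :=
  [/\ forall D, size (acc_eval A ak D) <= ca * k,
      forall z d, size (acc_createwit A ak z d) <= ca * k &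
      forall z w d, acc_verify A ak z w d -> size w <= ca * k].

Record rs_code := RSCode {
  rs_enc : seq bits -> seq bits;
  rs_dec : nat -> nat -> seq (option bits) -> seq bits (* DEC c d; None = erasure *)
}.

Definition n_erasures (r : seq (option bits)) : nat :=
  count (fun o => o == None) r.
Definition n_errors (r : seq (option bits)) (cw : seq bits) : nat :=
  count (fun p : option bits * bits =>
           if p.1 is Some x then x != p.2 else false) (zip r cw).

(* ENC maps b symbols of w bits (over GF(2^w), hence n <= 2^w) to n symbols of
   w bits; DEC c d corrects up to c errors and d erasures when n - b >= 2c + d *)
Definition rs_spec (C : rs_code) (n b : nat) : Prop :=
  forall (w : nat) (data : seq bits),
    n <= 2 ^ w -> size data = b -> all (fun x => size x == w) data ->
    [/\ size (rs_enc C data) = n,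
        all (fun x => size x == w) (rs_enc C data) &
        forall (c d : nat) (r : seq (option bits)), size r = n ->
          n_errors r (rs_enc C data) <= c -> n_erasures r <= d ->
          2 * c + d <= n - b -> rs_dec C c d r = data].

Definition ceildiv (l b : nat) : nat := (l + b.-1) %/ b.
(* block width: ceil(l/b), enlarged to log2 n so that an RS code exists *)
Definition blk_w (n b l : nat) : nat := maxn (ceildiv l b) (up_log 2 n).
Definition pad (L : nat) (x : bits) : bits := take L (x ++ nseq L false).
Definition split_blocks (w b : nat) (x : bits) : seq bits :=
  mkseq (fun i => take w (drop (i * w) x)) b.

Definition Encode (C : rs_code) (n b l : nat) (m : bits) : seq item :=
  let w := blk_w n b l in
  let cw := rs_enc C (split_blocks w b (pad (b * w) m)) in
  [seq (j, nth [::] cw j) | j <- iota 0 n].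

(* Reconstruct(S, ak, z, d0); S lists the pair received from P_0, ..., P_{n-1};
   the padding is removed by truncating to the (public) length l *)
Definition Reconstruct (C : rs_code) AK (A : accumulator AK) (ak : AK) (l : nat)
    (S : seq (option (bits * bits))) (z : bits) (d0 : nat) : bits :=
  take l (flatten (rs_dec C 0 d0
    [seq (match p.2 with
          | Some (x, w) => if acc_verify A ak z w (p.1, x) then Some x else None
          | None => None end) | p <- zip (iota 0 (size S)) S])).

Record adv_choice (n l : nat) := AdvChoice {
  a_msg1 : 'I_n -> l.-tuple bool;  (* step 1 message received by P_i from a corrupt sender *)
  a_bb : 'I_n -> bits;             (* output of the k-bit BB oracle at P_i *)
  a_ba : 'I_n -> bool;             (* output of the 1-bit BA oracle at P_i *)
  a_step3 : 'I_n -> 'I_n -> option (bits * bits); (* a_step3 j i: corrupt P_j -> P_i, step 3 *)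
  a_step4 : 'I_n -> 'I_n -> option (bits * bits)  (* a_step4 j i: corrupt P_j -> P_i, step 4 *)
}.

Definition optsize (o : option (bits * bits)) : nat :=
  if o is Some (x, w) then size x + size w else 0.

Section Execution.
Variables (n t l k : nat) (AK : Type) (A : accumulator AK) (ak : AK) (code : rs_code).
Variables (s : 'I_n) (m : l.-tuple bool) (Cor : {set 'I_n}) (adv : adv_choice n l).

Definition honest (i : 'I_n) : bool := i \notin Cor.
Definition bsz : nat := n - t.

Definition recv1 (i : 'I_n) : bits := if s \in Cor then val (a_msg1 adv i) else val m.
Definition D_s : seq item := Encode code n bsz l (val m).
Definition z_s : bits := acc_eval A ak D_s.
Definition Dp (i : 'I_n) : seq item := Encode code n bsz l (recv1 i).
Definition zp (i : 'I_n) : bits := a_bb adv i.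
Definition happy (i : 'I_n) : bool := acc_eval A ak (Dp i) == zp i.

(* ideal oracles: BB (on z_s) and BA (on the happy bits); termination is built in *)
Definition bb_ok : Prop :=
  (forall i j, honest i -> honest j -> a_bb adv i = a_bb adv j) /\
  (honest s -> forall i, honest i -> a_bb adv i = z_s).
Definition ba_ok : Prop :=
  (forall i j, honest i -> honest j -> a_ba adv i = a_ba adv j) /\
  (forall v : bool, (forall i, honest i -> happy i = v) ->
     forall i, honest i -> a_ba adv i = v).

(* step 3: Distribute by an honest P_j, message to P_i *)
Definition dist (j i : 'I_n) : option (bits * bits) :=
  if a_ba adv j && happy j then
    let x := (nth (0, [::]) (Dp j) i).2 in
    Some (x, acc_createwit A ak (zp j) (val i, x))
  else None.
Definition recv3 (i j : 'I_n) : option (bits * bits) :=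
  if j \in Cor then a_step3 adv j i else dist j i.
Definition fwd (i : 'I_n) : option (bits * bits) :=
  if a_ba adv i then
    ohead [seq p <- pmap id [seq recv3 i j | j <- enum 'I_n]
           | acc_verify A ak (zp i) p.2 (val i, p.1)]
  else None.
Definition recv4 (i j : 'I_n) : option (bits * bits) :=
  if j \in Cor then a_step4 adv j i else fwd j.
(* steps 5-6; None = bot *)
Definition output (i : 'I_n) : option bits :=
  if ~~ a_ba adv i then None
  else if happy i then Some (recv1 i)
  else Some (Reconstruct code A ak l [seq recv4 i j | j <- enum 'I_n] (zp i) t).

Definition Termination : Prop := forall i, honest i -> exists o, output i = o.
Definition Agreement : Prop :=
  forall i j, honest i -> honest j -> output i = output j.
Definition Validity : Prop := honest s -> forall i, honest i -> output i = Some (val m).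

(* total number of bits sent by honest parties, oracle costs Bk = B(k), A1 = A(1) *)
Definition comm_cost (Bk A1 : nat) : nat :=
  (if honest s then n * l else 0) + Bk + A1
  + \sum_(j | honest j) \sum_(i < n) optsize (dist j i)
  + \sum_(j | honest j) n * optsize (fwd j).

(* an accumulator collision (D, d', w') computable from the execution:
   D = the set accumulated by an honest party, (d', w') an item/witness pair
   either received by an honest party or honestly generated by an honest party *)
Definition seen_pair (d : item) (w : bits) : Prop :=
  exists i : 'I_n, honest i /\
   ((exists j x, recv3 i j = Some (x, w) /\ d = (val i, x)) \/
    (exists j x, recv4 i j = Some (x, w) /\ d = (val j, x)) \/
    (d \in Dp i /\ w = acc_createwit A ak (acc_eval A ak (Dp i)) d)).
Definition collision_found : Prop :=
  exists (h : 'I_n) (d : item) (w : bits), honest h /\ seen_pair d w /\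
    d \notin Dp h /\ acc_verify A ak (acc_eval A ak (Dp h)) w d.

End Execution.

(* Every honest party outputs either bot (when the BA on the happy bits returns
   0) or the message received by some honest happy party.  Two honest happy
   parties hold messages whose encodings have the same accumulator value; by
   collision-freeness their codewords agree symbol by symbol, and as the code is
   injective the messages agree.  An unhappy honest party decodes the verified
   symbols forwarded in step 4: every honest party forwards its own symbol of
   that common codeword, so at most t symbols are erased and none is wrong.
   Each honest message is an O(l/n + k)-bit symbol with an O(k)-bit witness,
   which gives the O(n l + k n^2) term.  Whenever one of these steps fails, the
   execution exhibits an accumulator collision. *)
From Pilot Require Import Defs.
From HB Require Import structures.
From mathcomp Require Import all_boot zify.
From Stdlib Require Import Classical.
Set Implicit Arguments. Unset Strict Implicit. Unset Printing Implicit Defensive.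

Lemma split_blocks_reshape w b x : split_blocks w b x = reshape (nseq b w) x.
Proof.
rewrite /split_blocks /mkseq; elim: b x => [|b IH] x //=.
rewrite mul0n drop0 -IH -(addn0 1) iotaDl -map_comp; congr (_ :: _).
by apply: eq_map => i /=; rewrite drop_drop mulnDl mul1n addnC.
Qed.

Lemma split_blocksP w b x : size x = b * w ->
  [/\ size (split_blocks w b x) = b,
      all (fun y => size y == w) (split_blocks w b x) &
      flatten (split_blocks w b x) = x].
Proof.
move=> size_x; split; first by rewrite size_mkseq.
  apply/allP => y /mapP [i]; rewrite mem_iota add0n => /andP [_ ltib] ->.
  rewrite size_takel // size_drop size_x.
  have : i.+1 * w <= b * w by rewrite leq_mul2r ltib orbT.
  by rewrite mulSn; lia.
by rewrite split_blocks_reshape reshapeKr // sumn_nseq size_x mulnC.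
Qed.

Lemma size_pad L x : size x <= L -> size (pad L x) = L.
Proof. by move=> le_xL; rewrite size_takel // size_cat size_nseq leq_addl. Qed.

Lemma take_pad L x : size x <= L -> take (size x) (pad L x) = x.
Proof. by move=> le_xL; rewrite take_takel // take_size_cat. Qed.

Lemma leq_exp2_blk_w n b l : n <= 2 ^ blk_w n b l.
Proof. by rewrite (leq_trans (@up_logP 2 n isT)) // leq_exp2l // leq_maxr. Qed.

Lemma leq_mul_blk_w n b l : 0 < b -> l <= b * blk_w n b l.
Proof.
move=> b_gt0; apply: (@leq_trans (b * ceildiv l b)); last first.
  by rewrite leq_mul2l leq_maxl orbT.
by have := divn_eq (l + b.-1) b; have := ltn_pmod (l + b.-1) b_gt0; rewrite /ceildiv; lia.
Qed.

Lemma blk_w_le_ceildiv n b l k : n <= 2 ^ k -> blk_w n b l <= ceildiv l b + k.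
Proof.
move=> le_n2k; rewrite geq_max leq_addr.
by rewrite (leq_trans (@up_log_min 2 _ _ isT le_n2k)) ?leq_addl.
Qed.

Lemma mul_ceildiv_le n t l : 2 * t < n -> n * ceildiv l (n - t) <= 2 * l + 2 * n.
Proof.
move=> majority.
have le_ceil : ceildiv l (n - t) * (n - t) <= l + n.
  by rewrite /ceildiv (leq_trans (leq_divM _ _)) //; lia.
have : n * ceildiv l (n - t) <= 2 * (n - t) * ceildiv l (n - t).
  by rewrite leq_mul2r; apply/orP; right; lia.
by lia.
Qed.

Definition codeword (code : rs_code) (n b l : nat) (x : bits) : seq bits :=
  rs_enc code (split_blocks (blk_w n b l) b (pad (b * blk_w n b l) x)).

Lemma mem_Encode code n b l x q y :
  (q, y) \in Encode code n b l x -> y = nth [::] (codeword code n b l x) q.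
Proof. by move=> /mapP [j _ [-> ->]]. Qed.

Lemma nth_Encode code n b l x (q : 'I_n) :
  nth (0, [::]) (Encode code n b l x) q = (val q, nth [::] (codeword code n b l x) q).
Proof. by rewrite /Encode (nth_map 0) ?size_iota // nth_iota. Qed.

Lemma Encode_nth_mem code n b l x (q : 'I_n) :
  (val q, nth [::] (codeword code n b l x) q) \in Encode code n b l x.
Proof. by rewrite -nth_Encode mem_nth // size_map size_iota. Qed.

Section ReedSolomon.
Variables (code : rs_code) (n t l : nat).
Hypotheses (lt_tn : t < n) (rs_ok : rs_spec code n (n - t)).

Local Notation cw := (codeword code n (n - t) l).
Local Notation width := (blk_w n (n - t) l).

Lemma encode_dataP x : size x = l ->
  let data := split_blocks width (n - t) (pad ((n - t) * width) x) in
  [/\ size data = n - t, all (fun y => size y == width) data & take l (flatten data) = x].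
Proof.
move=> size_x data.
have le_xw : size x <= (n - t) * width by rewrite size_x leq_mul_blk_w // subn_gt0.
have [size_data all_w flattenK] := split_blocksP (size_pad le_xw).
by split => //; rewrite flattenK; move: (take_pad le_xw); rewrite size_x.
Qed.

Lemma codewordP x : size x = l ->
  [/\ size (cw x) = n, all (fun y => size y == width) (cw x) &
      forall c d r, size r = n -> n_errors r (cw x) <= c -> n_erasures r <= d ->
        2 * c + d <= t -> take l (flatten (rs_dec code c d r)) = x].
Proof.
move=> size_x; have [size_data all_w flattenK] := encode_dataP size_x.
have [size_cw all_cw decK] := rs_ok (leq_exp2_blk_w n (n - t) l) size_data all_w.
split => // c d r size_r errs eras le_t.
by rewrite decK // (leq_trans le_t) //; lia.
Qed.

Lemma size_nth_codeword x q : size x = l -> size (nth [::] (cw x) q) <= width.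
Proof.
move=> /codewordP [size_cw /all_nthP all_cw _].
case: (ltnP q n) => [ltqn|leqn]; last by rewrite nth_default ?size_cw.
by rewrite -size_cw in ltqn; move/eqP: (all_cw [::] q ltqn) => ->.
Qed.

Lemma decode_erasures x (g : 'I_n -> option bits) : size x = l ->
  (forall q, g q = None \/ g q = Some (nth [::] (cw x) q)) ->
  count (fun q => g q == None) (enum 'I_n) <= t ->
  take l (flatten (rs_dec code 0 t [seq g q | q <- enum 'I_n])) = x.
Proof.
move=> size_x gP eras; have [size_cw _ decK] := codewordP size_x.
apply: decK; last by [].
- by rewrite size_map size_enum_ord.
- move: size_cw; set c := cw x => size_c.
  have -> : c = [seq nth [::] c (val q) | q <- enum 'I_n].
    by rewrite (map_comp (nth [::] c) val) val_enum_ord -size_c -/(mkseq _ _) mkseq_nth.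
  rewrite /n_errors zip_map count_map leqn0 -(count_pred0 (enum 'I_n)); apply/eqP.
  by apply: eq_count => q /=; case: (gP q) => -> //=; rewrite eqxx.
- by rewrite /n_erasures count_map.
Qed.

Lemma codeword_inj x1 x2 : size x1 = l -> size x2 = l -> cw x1 = cw x2 -> x1 = x2.
Proof.
move=> size1 size2 eq_cw; pose g (q : 'I_n) := Some (nth [::] (cw x1) q).
have no_eras : count (fun q => g q == None) (enum 'I_n) <= t by rewrite count_pred0.
rewrite -(@decode_erasures x1 g) //; last by right.
by rewrite -(@decode_erasures x2 g) //; right; rewrite /g eq_cw.
Qed.

End ReedSolomon.

Lemma count_enum_mem (T : finType) (A : {pred T}) : count (mem A) (enum T) = #|A|.
Proof.
by rewrite cardE size_filter count_filter; apply: eq_count => x /=; rewrite andbT.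
Qed.

Lemma sum_ord_le n (P : pred 'I_n) (F : 'I_n -> nat) c :
  (forall j, P j -> F j <= c) -> \sum_(j < n | P j) F j <= n * c.
Proof.
move=> le_Fc; rewrite -[n in n * _]card_ord -sum_nat_const big_mkcond /=.
by apply: leq_sum => j _; case: ifP => // /le_Fc.
Qed.

Section Protocol.
Variables (n t l k ca : nat) (AK : Type) (A : accumulator AK) (ak : AK) (code : rs_code).
Variables (s : 'I_n) (m : l.-tuple bool) (Cor : {set 'I_n}) (adv : adv_choice n l).
Hypotheses (majority : 2 * t < n) (few_corrupt : #|Cor| <= t).
Hypotheses (acc_ok : acc_correct A ak) (acc_small : acc_size A ak k ca).
Hypotheses (rs_ok : rs_spec code n (n - t)).
Hypotheses (bb : bb_ok t A ak code s m Cor adv) (ba : ba_ok t A ak code s m Cor adv).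
Hypothesis no_collision : ~ collision_found t A ak code s m Cor adv.

Local Notation honest := (honest Cor).
Local Notation recv1 := (recv1 s m Cor adv).
Local Notation Dp := (Dp t code s m Cor adv).
Local Notation happy := (happy t A ak code s m Cor adv).
Local Notation dist := (dist t A ak code s m Cor adv).
Local Notation fwd := (fwd t A ak code s m Cor adv).
Local Notation recv3 := (recv3 t A ak code s m Cor adv).
Local Notation recv4 := (recv4 t A ak code s m Cor adv).
Local Notation output := (output t A ak code s m Cor adv).
Local Notation seen_pair := (seen_pair t A ak code s m Cor adv).
Local Notation cw := (codeword code n (n - t) l).
Local Notation width := (blk_w n (n - t) l).

Let lt_tn : t < n. Proof. by lia. Qed.

Let size_recv1 i : size (recv1 i) = l.
Proof. by rewrite /recv1; case: ifP => _; apply: size_tuple. Qed.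

Let zp_honest i j : honest i -> honest j -> zp adv i = zp adv j.
Proof. by case: bb => bb_agree _; apply: bb_agree. Qed.

Let ba_honest i j : honest i -> honest j -> a_ba adv i = a_ba adv j.
Proof. by case: ba => ba_agree _; apply: ba_agree. Qed.

Let eval_happy i : happy i -> acc_eval A ak (Dp i) = zp adv i.
Proof. by move/eqP. Qed.

Lemma seen_verified_mem h d w : honest h -> seen_pair d w ->
  acc_verify A ak (acc_eval A ak (Dp h)) w d -> d \in Dp h.
Proof.
move=> hon_h seen ver; apply/negPn/negP => d_notin.
by apply: no_collision; exists h, d, w.
Qed.

Lemma seen_verified_happy h i d w : honest h -> honest i -> happy h -> seen_pair d w ->
  acc_verify A ak (zp adv i) w d -> d.2 = nth [::] (cw (recv1 h)) d.1.
Proof.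
move=> hon_h hon_i happy_h seen ver; case: d seen ver => q y seen ver.
apply: mem_Encode; apply: (seen_verified_mem hon_h seen).
by rewrite eval_happy // (zp_honest hon_h hon_i).
Qed.

Lemma happy_recv1_eq i h : honest i -> honest h -> happy i -> happy h -> recv1 i = recv1 h.
Proof.
move=> hon_i hon_h happy_i happy_h.
have [size_i _ _] := codewordP lt_tn rs_ok (size_recv1 i).
have [size_h _ _] := codewordP lt_tn rs_ok (size_recv1 h).
apply: (codeword_inj lt_tn rs_ok (size_recv1 i) (size_recv1 h)).
apply: (@eq_from_nth _ [::]) => [|q]; first by rewrite size_i size_h.
rewrite size_i => ltqn; pose d := (q, nth [::] (cw (recv1 i)) q).
have in_i : d \in Dp i by apply: (@Encode_nth_mem _ _ _ _ _ (Ordinal ltqn)).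
apply: (@seen_verified_happy h h d (acc_createwit A ak (acc_eval A ak (Dp i)) d)) => //.
  by exists i; split => //; right; right.
by rewrite -(zp_honest hon_i hon_h) -eval_happy //; apply: acc_ok.
Qed.

(* BA validity: if every honest party were unhappy, the BA would return 0. *)
Lemma exists_happy i : honest i -> a_ba adv i -> exists2 h, honest h & happy h.
Proof.
move=> hon_i ba_i; case: ba => _ /(_ false) ba_valid.
case: (pickP [pred h | honest h && happy h]) => [h /andP [hon_h happy_h]|none].
  by exists h.
by rewrite ba_valid // in ba_i => h hon_h; have := none h; rewrite /= hon_h.
Qed.

Lemma fwd_verified p y w : fwd p = Some (y, w) ->
  acc_verify A ak (zp adv p) w (val p, y) /\ exists q, recv3 p q = Some (y, w).
Proof.
rewrite /fwd; case: ifP => // _; set L := filter _ _.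
case L_eq: L => [|[y' w'] ys] //= [<- <-].
have : (y', w') \in L by rewrite L_eq mem_head.
rewrite mem_filter mem_pmap map_id => /andP [ver /mapP [q _ recv_q]].
by split; last exists q.
Qed.

(* The honest distribution of [h] to [p] is verified by [p], so [p] forwards something. *)
Lemma fwd_honest p h : honest p -> honest h -> happy h -> a_ba adv p -> fwd p != None.
Proof.
move=> hon_p hon_h happy_h ba_p.
pose x := nth [::] (cw (recv1 h)) p.
have ba_h : a_ba adv h by rewrite (ba_honest hon_h hon_p).
rewrite /fwd ba_p; set L := filter _ _.
suff : (x, acc_createwit A ak (zp adv h) (val p, x)) \in L by case: L.
rewrite mem_filter mem_pmap map_id; apply/andP; split.
  by rewrite /= (zp_honest hon_p hon_h) -eval_happy //; apply/acc_ok/Encode_nth_mem.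
apply/mapP; exists h; first by rewrite mem_enum.
by rewrite /recv3 (negbTE hon_h) /dist ba_h happy_h /Defs.Dp /bsz nth_Encode.
Qed.

Lemma reconstruct_happy j h : honest j -> honest h -> happy h -> a_ba adv j ->
  Reconstruct code A ak l [seq recv4 j p | p <- enum 'I_n] (zp adv j) t = recv1 h.
Proof.
move=> hon_j hon_h happy_h ba_j.
rewrite /Reconstruct size_map size_enum_ord -val_enum_ord zip_map -map_comp.
apply: (decode_erasures lt_tn rs_ok (size_recv1 h)) => [p|] /=.
  case recv_p: (recv4 j p) => [[y w]|]; last by left.
  case: ifP => ver; last by left.
  right; congr Some; apply: (@seen_verified_happy h j (val p, y) w) => //.
  by exists j; split => //; right; left; exists p, y.
apply: leq_trans few_corrupt; rewrite -count_enum_mem.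
apply: sub_count => p /= /eqP erased; apply/negPn/negP => hon_p.
have ba_p : a_ba adv p by rewrite (ba_honest hon_p hon_j).
move: erased; rewrite /recv4 (negbTE hon_p).
case fwd_p: (fwd p) (fwd_honest hon_p hon_h happy_h ba_p) => [[y w]|] // _.
have [ver _] := fwd_verified fwd_p.
by rewrite -(zp_honest hon_p hon_j) ver.
Qed.

Lemma output_happy i h : honest i -> honest h -> happy h -> a_ba adv i ->
  output i = Some (recv1 h).
Proof.
move=> hon_i hon_h happy_h ba_i; rewrite /output ba_i /=.
by case: ifP => happy_i; congr Some; [apply: happy_recv1_eq | apply: reconstruct_happy].
Qed.

Lemma termination : Termination t A ak code s m Cor adv.
Proof. by move=> i _; eexists. Qed.

Lemma agreement : Agreement t A ak code s m Cor adv.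
Proof.
move=> i j hon_i hon_j; case ba_i: (a_ba adv i); last first.
  by rewrite /output ba_i -(ba_honest hon_i hon_j) ba_i.
have [h hon_h happy_h] := exists_happy hon_i ba_i.
have ba_j : a_ba adv j by rewrite (ba_honest hon_j hon_i).
by rewrite (output_happy hon_i hon_h) // (output_happy hon_j hon_h).
Qed.

Lemma validity : Validity t A ak code s m Cor adv.
Proof.
move=> hon_s i hon_i; case: bb ba => _ bb_valid [_ ba_valid].
have all_happy j : honest j -> happy j.
  by move=> hon_j; rewrite /happy /Defs.Dp /recv1 (negbTE hon_s) /zp bb_valid.
by rewrite /output (ba_valid true) // all_happy // /recv1 (negbTE hon_s).
Qed.

Lemma optsize_dist j i : optsize (dist j i) <= width + ca * k.
Proof.
case: acc_small => _ wit_small _; rewrite /dist; case: ifP => //= _.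
by rewrite leq_add // /Defs.Dp /bsz nth_Encode (size_nth_codeword lt_tn rs_ok).
Qed.

Lemma optsize_fwd j : honest j -> optsize (fwd j) <= width + ca * k.
Proof.
case: acc_small => _ _ ver_small hon_j; case ba_j: (a_ba adv j); last by rewrite /fwd ba_j.
have [h hon_h happy_h] := exists_happy hon_j ba_j.
case fwd_j: (fwd j) => [[y wit]|] //=.
have [ver [q recv_q]] := fwd_verified fwd_j.
rewrite leq_add ?(ver_small _ _ _ ver) //.
have -> : y = nth [::] (cw (recv1 h)) j.
  apply: (@seen_verified_happy h j (val j, y) wit) => //.
  by exists j; split => //; left; exists q, y.
exact: size_nth_codeword.
Qed.

Lemma comm_cost_le Bk A1 :
  comm_cost t A ak code s m Cor adv Bk A1
    <= n * l + Bk + A1 + 2 * (n * (n * (width + ca * k))).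
Proof.
have sent1 : (if honest s then n * l else 0) <= n * l by case: ifP.
have sent3 :
    \sum_(j | honest j) \sum_(i < n) optsize (dist j i) <= n * (n * (width + ca * k)).
  by apply: sum_ord_le => j _; apply: sum_ord_le => i _; apply: optsize_dist.
have sent4 : \sum_(j | honest j) n * optsize (fwd j) <= n * (n * (width + ca * k)).
  by apply: sum_ord_le => j hon_j; rewrite leq_mul2l optsize_fwd ?orbT.
by rewrite /comm_cost; lia.
Qed.

End Protocol.

Lemma comm_bound_arith n t l k ca Bk A1 : 2 * t < n -> 0 < k -> n <= 2 ^ k ->
  n * l + Bk + A1 + 2 * (n * (n * (blk_w n (n - t) l + ca * k)))
    <= (6 + 2 * ca) * (n * l + Bk + A1 + k * n ^ 2).
Proof.
move=> majority k_gt0 le_n2k.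
have le_w := blk_w_le_ceildiv (n - t) l le_n2k.
have le_nc := mul_ceildiv_le l majority.
have le_nn : n * n <= k * (n * n) by rewrite leq_pmull.
move: (blk_w _ _ _) (ceildiv _ _) le_w le_nc => w c le_w le_nc.
have le_nw : n * w <= 2 * l + 2 * n + n * k.
  have : n * w <= n * c + n * k by rewrite -mulnDr leq_mul2l le_w orbT.
  by lia.
have := leq_mul (leqnn n) le_nw; rewrite expnS expn1; nia.
Qed.

Theorem mainTheorem9 :
  forall ca : nat, exists Cst : nat,
  forall (n t l k : nat) (AK : Type) (A : accumulator AK) (ak : AK) (code : rs_code)
    (s : 'I_n) (m : l.-tuple bool) (Cor : {set 'I_n}) (adv : adv_choice n l)
    (Bk A1 : nat),
    2 * t < n -> #|Cor| <= t -> 0 < k -> n <= 2 ^ k ->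
    acc_correct A ak -> acc_size A ak k ca -> rs_spec code n (n - t) ->
    bb_ok t A ak code s m Cor adv -> ba_ok t A ak code s m Cor adv ->
    (Termination t A ak code s m Cor adv /\ Agreement t A ak code s m Cor adv /\
     Validity t A ak code s m Cor adv /\
     comm_cost t A ak code s m Cor adv Bk A1 <= Cst * (n * l + Bk + A1 + k * n ^ 2))
    \/ collision_found t A ak code s m Cor adv.
Proof.
move=> ca; exists (6 + 2 * ca).
move=> n t l k AK A ak code s m Cor adv Bk A1 majority few_corrupt k_gt0 le_n2k
  acc_ok acc_small rs_ok bb ba.
have [collision|no_collision] := classic (collision_found t A ak code s m Cor adv).
  by right.
left; split; first exact: termination.
split; first exact: agreement majority few_corrupt acc_ok rs_ok bb ba no_collision.
split; first exact: validity bb ba.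
apply: leq_trans (comm_bound_arith l ca Bk A1 majority k_gt0 le_n2k).
exact: comm_cost_le majority few_corrupt acc_small rs_ok bb ba no_collision Bk A1.
Qed.
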